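(* Let $X$ be a correlator of type $X_{-1}$ and let $W_1=x_1^{a_1}x_2+\dots+x_{N-1}^{a_{N-1}}x_N+x_N^{a_N}x_1$ be a loop summand with $K_{W_1}=1$. Then, after cyclically renumbering the variables of $W_1$, the sequence $(K_1,\dots,K_N)$ is a concatenation of blocks $(0)$ and $(-1,1)$ followed by exactly one of the blocks $(1)$, $(-1,2)$, $(-2,3)$. The block $(-2,3)$ can occur only if $a_{N-1}=2$, and in the cases $(-1,2)$ and $(-2,3)$ one has $\ell_{N-1}+\ell_N\le1$.
   Context: $W=\bigoplus_jW_j$ is an invertible polynomial written as a disjoint sum of atomic summands, $E_W$ its exponent matrix, $K_{W_1}=\sum_{i\in W_1}K_i$, loop indices taken mod $N$. A genus-zero correlator (B-model of $W^T$, or A-model of $(W,G_W)$ via Krawitz's map) is of type $X_{-1}$ if it has at least four insertions, has the form $\langle x_N,\dots,x_N,\dots,x_1,\dots,x_1,\alpha,\beta\rangle$ with $x_i$ appearing $\ell_i\ge0$ times and $\alpha=\prod x_i^{m_i}$, $\beta=\prod x_i^{n_i}$ monomials of the standard basis of $\mathrm{Jac}(W^T)$ (for a loop summand: exponents $0\le m_i,n_i\le a_i-1$), and, with $b=E_W^{-1}(\ell+m+n+2\cdot\mathbf 1)$ and $K_i=\ell_i-b_i+1$, satisfies $K_i\in\mathbb Z$ and $\sum_iK_i=1$. *)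

From HB Require Import structures.
From mathcomp Require Import all_boot all_order all_algebra.
Set Implicit Arguments. Unset Strict Implicit. Unset Printing Implicit Defensive.
Import Order.TTheory GRing.Theory Num.Theory.
Local Open Scope ring_scope.

(* Exponent matrix of the loop  W_1 = x_1^{a_1} x_2 + ... + x_N^{a_N} x_1
   (0-indexed): row i is the monomial x_i^{a_i} x_{i+1 mod N};
   entry (i,i) = a_i, entry (i, i+1 mod N) = 1, others 0. *)
Definition loop_mx (N : nat) (a : 'I_N -> nat) : 'M[rat]_N :=
  \matrix_(i < N, j < N)
    (if i == j then (a i)%:R
     else if (val j == (val i).+1 %% N)%N then 1 else 0).

(* Exponent matrix E_W of W = W_1 (+) W', W_1 the loop (first N variables),
   W' the remaining summands with exponent matrix E2 (M variables). *)
Definition expmx (N M : nat) (a : 'I_N -> nat) (E2 : 'M[nat]_M) : 'M[rat]_(N + M) :=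
  block_mx (loop_mx a) 0 0 (map_mx (fun k : nat => k%:R) E2).

Definition bvec (N M : nat) (a : 'I_N -> nat) (E2 : 'M[nat]_M)
  (l m n : 'I_(N + M) -> nat) : 'cV[rat]_(N + M) :=
  invmx (expmx a E2) *m \col_i ((l i + m i + n i + 2)%N%:R).

Definition Kval (N M : nat) (a : 'I_N -> nat) (E2 : 'M[nat]_M)
  (l m n : 'I_(N + M) -> nat) (i : 'I_(N + M)) : rat :=
  (l i)%:R - bvec a E2 l m n i 0 + 1.

Inductive blocks01 : seq rat -> Prop :=
  | blocks_nil : blocks01 [::]
  | blocks_0 s : blocks01 s -> blocks01 (0 :: s)
  | blocks_m11 s : blocks01 s -> blocks01 (-1 :: 1 :: s).

(* Row i of E_W b = l + m + n + 2 reads a_i b_i + b_{i+1} = l_i + m_i + n_i + 2 on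
   the loop, and b_i = l_i + 1 - K_i.  Whenever K_i < 0 this forces
   K_i + K_{i+1} >= 0, with equality only for (-1, 1), and with K_i + K_{i+1} = 1
   only for (-1, 2) or for (-2, 3) with a_i = 2, in both cases with
   l_i + l_{i+1} <= 1.  Read cyclically from just after a nonnegative K_j, the
   sequence K therefore splits greedily into blocks (K_i) with K_i >= 0 and
   (K_i, K_{i+1}) with K_i < 0, all of nonnegative integer sum.  As the sum is
   K_{W_1} = 1, one block has sum 1 and all others sum 0; rotating that block to
   the end gives the claim. *)

From HB Require Import structures.
From mathcomp Require Import all_boot all_order all_algebra.
From mathcomp Require Import zify ring.
Set Implicit Arguments.
Unset Strict Implicit.
Unset Printing Implicit Defensive.
Import Order.TTheory GRing.Theory Num.Theory.
Local Open Scope ring_scope.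

Lemma blocks01_cat (p q : seq rat) : blocks01 p -> blocks01 q -> blocks01 (p ++ q).
Proof.
by move=> bp bq; elim: bp => [|s _|s _] //=; [exact: blocks_0 | exact: blocks_m11].
Qed.

Section CyclicBlocks.

Variables (T : eqType) (k : T -> int) (special : rel T).

Definition kblocks (s : seq T) := blocks01 [seq (k x)%:~R : rat | x <- s].

Definition pair_ok : rel T := fun x y =>
  (k x < 0) ==> [&& 0 <= k x + k y, (k x + k y == 0) ==> (k x == -1)
                  & (k x + k y == 1) ==> special x y].

Inductive block_parse : seq T -> Prop :=
  | parse_nil : block_parse [::]
  | parse_single x s : 0 <= k x -> block_parse s -> block_parse (x :: s)
  | parse_pair x y s : k x < 0 -> pair_ok x y -> block_parse s ->
      block_parse [:: x, y & s].

Definition final_block (G : seq T) :=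
  (exists x, G = [:: x] /\ k x = 1) \/ (exists x y, G = [:: x; y] /\ special x y).

Lemma kblocks_cat p q : kblocks p -> kblocks q -> kblocks (p ++ q).
Proof. by rewrite /kblocks map_cat; exact: blocks01_cat. Qed.

(* [y] only supplies the default value of [last]: as the last entry is
   nonnegative, every negative entry has a successor to pair with. *)
Lemma path_block_parse y s :
  path pair_ok y s -> 0 <= k (last y s) -> block_parse s.
Proof.
have [n] := ubnP (size s); elim: n y s => // n IH y [|x [|z u]] //= lt_n.
- by move=> _ _; exact: parse_nil.
- by move=> _ kx; apply: parse_single kx parse_nil.
move=> /and3P [_ ok_xz path_u] last_u; have [kx | kx] := ltP (k x) 0.
  by apply: parse_pair ok_xz (IH z u _ _ _) => //; lia.
by apply: parse_single kx (IH x [:: z & u] _ _ _) => //=; lia.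
Qed.

Definition ksum (s : seq T) := \sum_(x <- s) k x.

Lemma ksum_cons x s : ksum (x :: s) = k x + ksum s.
Proof. exact: big_cons. Qed.

Lemma kblocks_cons0 x s : k x = 0 -> kblocks s -> kblocks (x :: s).
Proof. by rewrite /kblocks /= => ->; exact: blocks_0. Qed.

Lemma kblocks_cons_m11 x y s :
  k x = -1 -> k y = 1 -> kblocks s -> kblocks [:: x, y & s].
Proof. by rewrite /kblocks /= => -> ->; exact: blocks_m11. Qed.

Lemma block_parse_sum_ge0 s : block_parse s -> 0 <= ksum s.
Proof.
elim=> [|x {}s kx _ IH|x y {}s kx /implyP/(_ kx)/and3P [kxy _ _] _ IH];
  rewrite ?ksum_cons; [by rewrite /ksum big_nil | lia | lia].
Qed.

Lemma block_parse_sum0 s : block_parse s -> ksum s = 0 -> kblocks s.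
Proof.
elim=> [_|x {}s kx ps IH|x y {}s kx ok ps IH]; rewrite ?ksum_cons.
- exact: blocks_nil.
- have := block_parse_sum_ge0 ps => ge0 sum0.
  apply: kblocks_cons0; [lia | apply: IH; lia].
have := block_parse_sum_ge0 ps => ge0 sum0.
move: ok => /implyP/(_ kx)/and3P [kxy /implyP kx_m1 _].
have kxy0 : k x + k y = 0 by lia.
have /eqP kx1 := kx_m1 (introT eqP kxy0).
apply: kblocks_cons_m11; [lia | lia | apply: IH; lia].
Qed.

Lemma block_parse_sum1 s : block_parse s -> ksum s = 1 ->
  exists p G q, s = p ++ G ++ q /\ kblocks p /\ final_block G /\ kblocks q.
Proof.
elim=> [|x {}s kx ps IH|x y {}s kx ok ps IH]; rewrite ?ksum_cons.
- by rewrite /ksum big_nil.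
- have := block_parse_sum_ge0 ps => ge0 sum1.
  have [kx0 | kx1] : k x = 0 \/ k x = 1 by lia.
    have [p [G [q [-> [bp [fG bq]]]]]] := IH ltac:(lia).
    by exists (x :: p), G, q; split => //; split => //; apply: kblocks_cons0.
  exists [::], [:: x], s; split => //; split; first exact: blocks_nil.
  split; [by left; exists x | apply: block_parse_sum0 => //; lia].
have := block_parse_sum_ge0 ps => ge0 sum1.
move: ok => /implyP/(_ kx)/and3P [kxy /implyP kx_m1 /implyP sp].
have [kxy0 | kxy1] : k x + k y = 0 \/ k x + k y = 1 by lia.
  have /eqP kx1 := kx_m1 (introT eqP kxy0).
  have [p [G [q [-> [bp [fG bq]]]]]] := IH ltac:(lia).
  exists [:: x, y & p], G, q; split => //; split => //.
  apply: kblocks_cons_m11 => //; lia.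
exists [::], [:: x; y], s; split => //; split; first exact: blocks_nil.
split; [by right; exists x, y; split; last exact: sp (introT eqP kxy1)
       | apply: block_parse_sum0 => //; lia].
Qed.

Lemma cycle_final_block s : cycle pair_ok s -> ksum s = 1 ->
  exists r p G, rot r s = p ++ G /\ kblocks p /\ final_block G.
Proof.
move=> cyc_s sum1.
have [y s_y ky] : exists2 y, y \in s & 0 <= k y.
  apply/hasP; apply: contra_eqT sum1 => /hasPn neg.
  rewrite /ksum big_seq lt_eqF // (le_lt_trans (sumr_le0 _ _)) // => x /neg.
  by rewrite -ltNge => /ltW.
have [i s' rot_i] := rot_to s_y.
set w := rot 1 (rot i s).
have w_rcons : w = rcons s' y by rewrite /w rot_i rot1_cons.
have parse_w : block_parse w.
  rewrite w_rcons; apply: (@path_block_parse y); last by rewrite last_rcons.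
  by have := cyc_s; rewrite -(rot_cycle i) rot_i.
have sum_w : ksum w = 1 by rewrite /ksum (perm_big s) ?perm_rot.
have [p [G [q [w_eq [bp [fG bq]]]]]] := block_parse_sum1 parse_w sum_w.
exists (rot_add s (rot_add s i 1) (size (p ++ G))), (q ++ p), G.
rewrite -!rot_rot_add -/w w_eq catA rot_size_cat -catA.
by split => //; split => //; apply: kblocks_cat.
Qed.

End CyclicBlocks.

Lemma ordS_neq N (i : 'I_N) : (1 < N)%N -> ordS i != i.
Proof.
move=> N_gt1; have lt_iN := ltn_ord i; apply/eqP => /(congr1 val) /=.
case: (ltnP i.+1 N) => [lt_SiN|ge_SiN]; first by rewrite modn_small //; lia.
have -> : i.+1 = N by lia.
by rewrite modnn; lia.
Qed.

Lemma cyclic_recurrence_eq0 (R : numDomainType) N (a : 'I_N -> nat) (y : 'I_N -> R) :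
  (forall i, (2 <= a i)%N) -> (forall i, (a i)%:R * y i + y (ordS i) = 0) ->
  forall i, y i = 0.
Proof.
move=> a_ge2 rec.
have grow i : 2 * `|y i| <= `|y (ordS i)|.
  have -> : y (ordS i) = - ((a i)%:R * y i).
    by apply/eqP; rewrite -addr_eq0 addrC rec.
  by rewrite normrN normrM normr_nat ler_wpM2r // ler_nat.
have sum0 : \sum_i `|y i| = 0.
  apply/eqP; rewrite eq_le sumr_ge0 // andbT -(gerDl (\sum_i `|y i|)).
  rewrite -mulr2n -mulr_natl mulr_sumr [X in _ <= X](reindex_inj (@ordS_inj N)).
  exact: ler_sum.
by move=> i; apply/eqP/normr0P; move/psumr_eq0P: sum0 => ->.
Qed.

Section LoopMatrix.

Variables (N : nat) (a : 'I_N -> nat).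
Hypothesis N_gt1 : (1 < N)%N.

Lemma loop_mx_row (y : 'I_N -> rat) i :
  \sum_j loop_mx a i j * y j = (a i)%:R * y i + y (ordS i).
Proof.
rewrite (bigD1 i) // (bigD1 (ordS i)) ?ordS_neq //= big1 ?addr0 => [|j /andP [ji jS]].
  by rewrite !mxE eqxx eq_sym (negbTE (ordS_neq _ N_gt1)) eqxx mul1r.
rewrite mxE eq_sym (negbTE ji); case: eqP => [j_eq|]; last by rewrite mul0r.
by case/eqP: jS; apply: val_inj.
Qed.

Hypothesis a_ge2 : forall i, (2 <= a i)%N.

Lemma loop_mx_unit : loop_mx a \in unitmx.
Proof.
rewrite unitmxE unitfE -det_tr; apply/det0P => -[v /eqP v_neq0 v_ker]; apply: v_neq0.
apply/rowP => i; rewrite mxE; apply: (@cyclic_recurrence_eq0 _ _ a (v 0)) => // j.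
have /rowP/(_ j) := v_ker; rewrite !mxE => ker_j.
rewrite -loop_mx_row -[RHS]ker_j; apply: eq_bigr => k _.
by rewrite [_^T _ _]mxE mulrC.
Qed.

End LoopMatrix.

Lemma loop_pair_arith (a L1 L2 s k1 k2 : int) :
  2 <= a -> 0 <= L1 -> 0 <= L2 -> 0 <= s <= 2 * a - 2 ->
  a * (L1 + 1 - k1) + (L2 + 1 - k2) = L1 + s + 2 -> k1 < 0 ->
  0 <= k1 + k2 /\ (k1 + k2 = 0 -> k1 = -1) /\
  (k1 + k2 = 1 -> ((k1 = -1 /\ k2 = 2) \/ (k1 = -2 /\ k2 = 3 /\ a = 2))
                  /\ L1 + L2 <= 1).
Proof.
move=> a_ge2 L1_ge0 L2_ge0 /andP [s_ge0 s_le] row_eq k1_lt0.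
(* c = b_1 - 2 >= L1 for b_1 = L1 + 1 - k1, and then k1 + k2 is a sum of three
   nonnegative terms. *)
set c := L1 - 1 - k1; set Q := (a - 1) * c.
have sum_eq : k1 + k2 = L2 + Q + (2 * a - 2 - s) by rewrite /Q /c; nia.
have c_ge0 : 0 <= c by rewrite /c; lia.
have Q_ge_c : c <= Q by rewrite /Q; nia.
have Q_ge_a : 1 <= c -> a - 1 <= Q by rewrite /Q; nia.
have Q_c0 : c = 0 -> Q = 0 by rewrite /Q => ->; rewrite mulr0.
rewrite /c in c_ge0 Q_ge_c Q_ge_a Q_c0; lia.
Qed.

Lemma cycle_ordS N : cycle (fun i j : 'I_N => j == ordS i) (enum 'I_N).
Proof.
case: N => [|N]; first by rewrite (size0nil (size_enum_ord 0)).
rewrite (cycle_path ord0); apply/(pathP ord0) => i; rewrite size_enum_ord => lt_iN.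
apply/eqP/val_inj; rewrite /= nth_enum_ord //.
case: i lt_iN => [|i] lt_iN /=.
  by rewrite -nth_last size_enum_ord nth_enum_ord // modnn.
by rewrite nth_enum_ord ?modn_small //; lia.
Qed.

Section LoopSummand.

Variables (N M : nat) (a : 'I_N -> nat) (E2 : 'M[nat]_M) (l m n : 'I_(N + M) -> nat).
Hypotheses (N_gt1 : (1 < N)%N) (a_ge2 : forall i, (2 <= a i)%N).
Hypothesis E2_unit : \det (map_mx (fun k : nat => k%:R : rat) E2) != 0.

Local Notation b i := (bvec a E2 l m n (lshift M i) 0).
Local Notation K i := (Kval a E2 l m n (lshift M i)).
Local Notation L i := (l (lshift M i)).

Lemma expmx_unit : expmx a E2 \in unitmx.
Proof.
rewrite unitmxE unitfE det_ublock mulf_neq0 //.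
by rewrite -unitfE -unitmxE loop_mx_unit.
Qed.

Lemma bvec_loop_eq i :
  (a i)%:R * b i + b (ordS i) = (L i + m (lshift M i) + n (lshift M i) + 2)%N%:R.
Proof.
have E_b : expmx a E2 *m bvec a E2 l m n = \col_j (l j + m j + n j + 2)%N%:R.
  by rewrite mulKVmx // expmx_unit.
move: E_b; set bv := bvec a E2 l m n; clearbody bv => E_b.
have /colP/(_ (lshift M i)) := E_b; rewrite !mxE => <-.
rewrite big_split_ord /= [X in _ = _ + X]big1 ?addr0 => [|j _]; last first.
  by rewrite /expmx block_mxEur mxE mul0r.
under eq_bigr do rewrite /expmx block_mxEul.
by rewrite loop_mx_row.
Qed.

Definition Kint i : int := Num.floor (K i).

Definition loop_special : rel 'I_N := fun i j =>
  [|| (Kint i == -1) && (Kint j == 2) | [&& Kint i == -2, Kint j == 3 & a i == 2%N]]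
  && (L i + L j <= 1)%N.

Hypothesis K_int : forall i, K i \is a Num.int.

Lemma KintK i : (Kint i)%:~R = K i.
Proof. by have := K_int i; rewrite intrEfloor => /eqP. Qed.

Lemma loop_row_int i :
  (a i)%:Z * ((L i)%:Z + 1 - Kint i) + ((L (ordS i))%:Z + 1 - Kint (ordS i))
    = (L i)%:Z + (m (lshift M i) + n (lshift M i))%N%:Z + 2.
Proof.
have b_eq j : b j = (L j)%:R + 1 - (Kint j)%:~R by rewrite KintK /Kval; ring.
have := bvec_loop_eq i; rewrite !b_eq => row.
apply: (@intr_inj rat); rewrite !(intrD, intrM, intrN) -!pmulrn.
by apply: etrans (etrans _ row) _; [ring | rewrite !natrD; ring].
Qed.

Hypotheses (m_le : forall i, (m (lshift M i) <= (a i).-1)%N)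
           (n_le : forall i, (n (lshift M i) <= (a i).-1)%N).

Lemma cycle_loop_pair_ok : cycle (pair_ok Kint loop_special) (enum 'I_N).
Proof.
apply: sub_cycle (cycle_ordS N) => i _ /eqP ->.
have := @loop_pair_arith (a i) (L i) (L (ordS i))
  (m (lshift M i) + n (lshift M i))%N (Kint i) (Kint (ordS i)).
have := a_ge2 i; have := m_le i; have := n_le i; move: (loop_row_int i).
rewrite /pair_ok /loop_special; clear; lia.
Qed.

End LoopSummand.

Theorem lemma6p15
  (N M : nat) (a : 'I_N -> nat) (E2 : 'M[nat]_M)
  (l m n : 'I_(N + M) -> nat)
  (hN : (2 <= N)%N)
  (ha : forall i : 'I_N, (2 <= a i)%N)
  (hE2 : \det (map_mx (fun k : nat => k%:R : rat) E2) != 0)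
  (hm : forall i : 'I_N, (m (lshift M i) <= (a i).-1)%N)
  (hn : forall i : 'I_N, (n (lshift M i) <= (a i).-1)%N)
  (h4 : (4 <= \sum_(i < N + M) l i + 2)%N)
  (hKint : forall i : 'I_(N + M), Kval a E2 l m n i \is a Num.int)
  (hKsum : \sum_(i < N + M) Kval a E2 l m n i = 1)
  (hKW1 : \sum_(i < N) Kval a E2 l m n (lshift M i) = 1) :
  exists r : nat,
    let Ks := rot r [seq Kval a E2 l m n (lshift M i) | i <- enum 'I_N] in
    let As := rot r [seq a i | i <- enum 'I_N] in
    let Ls := rot r [seq l (lshift M i) | i <- enum 'I_N] in
    exists p : seq rat, blocks01 p /\
      (Ks = p ++ [:: 1]
       \/ (Ks = p ++ [:: -1; 2]
           /\ (nth 0 Ls (N - 2) + nth 0 Ls (N - 1) <= 1)%N)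
       \/ (Ks = p ++ [:: -2; 3]
           /\ nth 0 As (N - 2) = 2%N
           /\ (nth 0 Ls (N - 2) + nth 0 Ls (N - 1) <= 1)%N)).
Proof.
set k := Kint a E2 l m n.
have cyc : cycle (pair_ok k (loop_special a E2 l m n)) (enum 'I_N).
  by apply: cycle_loop_pair_ok => // i; apply: hKint.
have sum1 : ksum k (enum 'I_N) = 1.
  apply: (@intr_inj rat); rewrite rmorph_sum big_enum /= rmorph1 -{}[RHS]hKW1.
  by apply: eq_bigr => i _; rewrite KintK.
have [r [p [G [rot_r [bp fG]]]]] := cycle_final_block cyc sum1.
exists r => /=; exists [seq (k i)%:~R | i <- p]; split => //.
have rot_map (U : Type) (f : 'I_N -> U) :
    rot r [seq f i | i <- enum 'I_N] = [seq f i | i <- p ++ G].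
  by rewrite -rot_r map_rot.
have -> : [seq Kval a E2 l m n (lshift M i) | i <- enum 'I_N]
          = [seq (k i)%:~R | i <- enum 'I_N].
  by apply: eq_map => i; rewrite KintK.
rewrite !rot_map map_cat.
case: fG => [[x [-> kx]] | [x [y [G_xy /andP [kxy Lxy]]]]]; first by left; rewrite /= kx.
rewrite -/k in kxy; subst G; have size_p : (size p + 2 = N)%N.
  by have := congr1 size rot_r; rewrite size_rot size_enum_ord size_cat.
have [-> ->] : (N - 2 = size p)%N /\ (N - 1 = (size p).+1)%N by clear -size_p; lia.
rewrite !map_cat !nth_cat !size_map ltnn ltnNge leqnSn subnn subSnn /=.
by right; case/orP: kxy => [/andP [/eqP -> /eqP ->] | /and3P [/eqP -> /eqP -> /eqP]];
  [left | right].
Qed.
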